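(* Let $\alpha,\beta\in\mathbb{R}$ with $\alpha\neq 0$. Consider a linear pentapod with planar base, normalized as in the context, whose architecture parameters satisfy $r_l=\alpha x_l+\beta y_l$ for $l=1,\dots,5$ and $x_2=1/\alpha$. Then, as a polynomial in $u_1,\dots,u_6$, $$\det(S)=c\cdot u_3\bigl[u_6(\alpha u_1+\beta u_2-1)-u_3(\alpha u_4+\beta u_5)\bigr]$$ for some real constant $c$ depending only on the architecture parameters. In particular, whenever $c\ne 0$, the singularity variety $\{\det S=0\}\subset\mathbb{R}^6$ is the zero set of $u_3\bigl[u_6(\alpha u_1+\beta u_2-1)-u_3(\alpha u_4+\beta u_5)\bigr]$.
   Context: A linear pentapod has five legs joining base anchor points $M_l=(x_l,y_l,0)\in\mathbb{R}^3$ (planar base) to platform anchor points $m_l=\vec p+r_l\vec i$, $l=1,\dots,5$, lying on a line, where $\vec i=(u_1,u_2,u_3)$ is the direction of the platform line and $\vec p=(u_4,u_5,u_6)$ its position; a pose is a point $(u_1,\dots,u_6)\in\mathbb{R}^6$. Coordinates are normalized so that $M_1=(0,0,0)$, $r_1=0$, $M_2=(x_2,0,0)$, $r_2=1$. The singular poses are the zeros of $\det S$, where $S$ is the $7\times 7$ matrix whose rows are $(1,u_1,u_2,u_3,u_4,u_5,u_6)$, $(0,u_4,u_5,u_6,0,0,0)$, $(0,0,0,0,u_1,u_2,u_3)$, and, for $l=2,3,4,5$, $(r_l,x_l,y_l,0,r_lx_l,r_ly_l,0)$. *)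

From HB Require Import structures.
From mathcomp Require Import all_boot all_order all_algebra.
Set Implicit Arguments. Unset Strict Implicit. Unset Printing Implicit Defensive.
Import Order.TTheory GRing.Theory Num.Theory.
Local Open Scope ring_scope.

(* Leg l (1-based, l = 1..5) is encoded by the ordinal l-1 : 'I_5.
   x l, y l : base anchor coordinates M_l = (x l, y l, 0); r l : platform
   anchor parameter, m_l = p + r_l i. *)

Definition Srow (R : nzRingType) (x y r : 'I_5 -> R)
    (u1 u2 u3 u4 u5 u6 : R) (i : nat) : seq R :=
  match i with
  | 0 => [:: 1; u1; u2; u3; u4; u5; u6]
  | 1 => [:: 0; u4; u5; u6; 0; 0; 0]
  | 2 => [:: 0; 0; 0; 0; u1; u2; u3]
  | _ => let l : 'I_5 := inord (i - 2) in
         [:: r l; x l; y l; 0; r l * x l; r l * y l; 0]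
  end.

(* Rows 3..6 (0-based) correspond to legs l = 2,3,4,5 (ordinals 1..4). *)
Definition Smat (R : nzRingType) (x y r : 'I_5 -> R)
    (u1 u2 u3 u4 u5 u6 : R) : 'M[R]_7 :=
  \matrix_(i < 7, j < 7) nth 0 (Srow x y r u1 u2 u3 u4 u5 u6 i) j.

From HB Require Import structures.
From mathcomp Require Import all_boot all_order all_algebra ring perm.
Import Order.TTheory GRing.Theory Num.Theory.
Local Open Scope ring_scope.

(* Subtracting alpha times column 1 and beta times column 2 from column 0 does
   not change det S, and since r_l = alpha x_l + beta y_l it clears column 0 in
   the four leg rows.  The leg rows then live only in the columns of x, y, r x
   and r y, so after moving columns 0, 3, 6 to the front S is block upper
   triangular: det S is the 4x4 leg minor times the 3x3 determinant of the
   first three rows in columns 0, 3, 6, which is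
   u3 (u6 (1 - alpha u1 - beta u2) + u3 (alpha u4 + beta u5)). *)

Section DetColumnOps.
Variable R : comPzRingType.

Lemma det_xcol n (A : 'M[R]_n) j1 j2 : j1 != j2 -> \det (xcol j1 j2 A) = - \det A.
Proof. by move=> j12; rewrite xcolE det_mulmx det_perm odd_tperm j12 mulrN1. Qed.

Lemma det_mx22 (A : 'M[R]_2) : \det A = A 0 0 * A 1 1 - A 0 1 * A 1 0.
Proof.
rewrite (expand_det_row _ 0) !big_ord_recl !big_ord0 /cofactor !det_mx11 !mxE /=.
rewrite /bump /= !expr0 !expr1 !mul1r mulN1r addr0 mulrN.
by congr (A _ _ * A _ _ - A _ _ * A _ _); apply/val_inj.
Qed.

Lemma det_add_later_cols n (A : 'M[R]_n) (j0 : 'I_n) (a : 'I_n -> R) :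
  (forall k : 'I_n, (k <= j0)%N -> a k = 0) ->
  \det (\matrix_(i, j) (A i j + (j == j0)%:R * \sum_k a k * A i k)) = \det A.
Proof.
move=> a_le.
pose E : 'M[R]_n := \matrix_(k, j) ((k == j)%:R + (j == j0)%:R * a k).
have -> : \matrix_(i, j) (A i j + (j == j0)%:R * \sum_k a k * A i k) = A *m E.
  apply/matrixP => i j; rewrite !mxE.
  rewrite [RHS](eq_bigr (fun k => A i k * (k == j)%:R + (j == j0)%:R * (a k * A i k))).
    rewrite big_split /= -mulr_sumr; congr (_ + _).
    rewrite (bigD1 j) //= eqxx mulr1 big1 ?addr0 //.
    by move=> k /negPf ->; rewrite mulr0.
  by move=> k _; rewrite mxE; ring.
have trigE : is_trig_mx E.
  apply/is_trig_mxP => k j lt_kj; rewrite mxE (ltn_eqF lt_kj : (k == j) = false) add0r.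
  by case: eqP => [jj0|]; rewrite ?mul0r // a_le ?mulr0 // -jj0 ltnW.
rewrite det_mulmx (det_trig trigE) big1 ?mulr1 // => k _.
rewrite mxE eqxx; case: eqP => [->|]; last by rewrite mul0r addr0.
by rewrite a_le ?mulr0 ?addr0.
Qed.
End DetColumnOps.

Definition leg_minor {R : nzRingType} (x y r : 'I_5 -> R) : 'M[R]_4 :=
  \matrix_(i, j) let l : 'I_5 := inord i.+1 in
                 nth 0 [:: x l; r l * x l; r l * y l; y l] j.

Section SingularityMatrix.
Variables (R : comNzRingType) (alpha beta : R) (x y r : 'I_5 -> R).
Variables u1 u2 u3 u4 u5 u6 : R.
Hypothesis r_lin : forall l, r l = alpha * x l + beta * y l.

Local Notation S := (Smat x y r u1 u2 u3 u4 u5 u6).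
Local Notation col k := (@Ordinal 7 k isT).

Let col0_coef (k : 'I_7) : R := nth 0 [:: 0; - alpha; - beta] k.

Let S_reduced : 'M[R]_7 :=
  \matrix_(i, j) (S i j + (j == ord0)%:R * \sum_k col0_coef k * S i k).

(* Columns in the order 0, 3, 6 | 1, 4, 5, 2. *)
Let S_block : 'M[R]_(3 + 4) := xcol (col 2) (col 6) (xcol (col 1) (col 3) S_reduced).

Lemma det_S_block : \det S = \det S_block.
Proof.
by rewrite !det_xcol // opprK det_add_later_cols // => -[[]].
Qed.

Lemma dlsubmx_S_block : dlsubmx S_block = 0.
Proof.
apply/matrixP => i j; rewrite !mxE /S_reduced.
case: i => [[|[|[|[|i]]]] Hi] //; case: j => [[|[|[|j]]] Hj] //=;
  by rewrite ?permE /= !big_ord_recl !big_ord0 !mxE /col0_coef /= ?r_lin; ring.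
Qed.

Lemma drsubmx_S_block : drsubmx S_block = leg_minor x y r.
Proof.
apply/matrixP => i j; rewrite !mxE /S_reduced.
case: i => [[|[|[|[|i]]]] Hi] //; case: j => [[|[|[|[|j]]]] Hj] //=.
all: by rewrite ?permE /= mul0r addr0.
Qed.

Lemma det_ulsubmx_S_block :
  \det (ulsubmx S_block)
  = u3 * (u6 * (1 - alpha * u1 - beta * u2) + u3 * (alpha * u4 + beta * u5)).
Proof.
set A : 'M_(2 + 1) := ulsubmx S_block.
have dlA : dlsubmx A = 0.
  apply/matrixP => i j; rewrite !mxE /S_reduced.
  case: i => [[|i] Hi] //; case: j => [[|[|j]] Hj] //=;
    by rewrite ?permE /= !big_ord_recl !big_ord0 !mxE /col0_coef /=; ring.
rewrite -[A]submxK dlA (det_ublock (n1 := 2) (n2 := 1)) det_mx22 det_mx11.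
rewrite !mxE /S_reduced /=.
rewrite !permE /= !big_ord_recl !big_ord0 !mxE /col0_coef /=; ring.
Qed.

Lemma det_Smat :
  \det S = - \det (leg_minor x y r)
            * (u3 * (u6 * (alpha * u1 + beta * u2 - 1) - u3 * (alpha * u4 + beta * u5))).
Proof.
rewrite det_S_block -[S_block]submxK dlsubmx_S_block (det_ublock (n1 := 3) (n2 := 4)).
by rewrite drsubmx_S_block det_ulsubmx_S_block; ring.
Qed.

End SingularityMatrix.

Theorem mainTheorem2 (R : realFieldType) (alpha beta : R)
    (x y r : 'I_5 -> R) :
  alpha != 0 ->
  (* normalization: M_1 = (0,0,0), r_1 = 0, M_2 = (x_2,0,0), r_2 = 1 *)
  x (inord 0) = 0 -> y (inord 0) = 0 -> r (inord 0) = 0 ->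
  y (inord 1) = 0 -> r (inord 1) = 1 ->
  (* architecture hypotheses *)
  (forall l : 'I_5, r l = alpha * x l + beta * y l) ->
  x (inord 1) = alpha^-1 ->
  exists c : R,
    (forall u1 u2 u3 u4 u5 u6 : R,
       \det (Smat x y r u1 u2 u3 u4 u5 u6)
       = c * (u3 * (u6 * (alpha * u1 + beta * u2 - 1)
                    - u3 * (alpha * u4 + beta * u5))))
    /\ (c != 0 ->
        forall u1 u2 u3 u4 u5 u6 : R,
          \det (Smat x y r u1 u2 u3 u4 u5 u6) = 0 <->
          u3 * (u6 * (alpha * u1 + beta * u2 - 1)
                - u3 * (alpha * u4 + beta * u5)) = 0).
Proof.
(* Only the linear relation between r and (x, y) is needed. *)
move=> _ _ _ _ _ _ r_lin _.
exists (- \det (leg_minor x y r)).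
split=> [u1 u2 u3 u4 u5 u6|c_neq0 u1 u2 u3 u4 u5 u6]; rewrite (det_Smat _ alpha beta) //.
split=> [/eqP|->]; last by rewrite mulr0.
by rewrite mulf_eq0 (negPf c_neq0) => /eqP.
Qed.
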